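(* Let $S^\star\in\mathbb R^{d\times d}$ have at most $s$ nonzero entries in total and at most $\alpha d$ nonzero entries in every row and every column, let $\Delta^\star,\hat\Delta\in\mathbb R^{d\times d}$ be arbitrary, and let $R^\star=\Delta^\star-S^\star$. Let $\hat\alpha\ge\alpha$, let $\hat s\ge s$ be an integer, and let $S^0=\mathcal T_{\hat\alpha}\{\mathcal J_{\hat s}(\hat\Delta)\}$. Then $$\|S^0-S^\star\|_{\infty,\infty}\le3\|\hat\Delta-\Delta^\star\|_{\infty,\infty}+3\|R^\star\|_{\infty,\infty},\qquad \|S^0-S^\star\|_F\le(2\hat s)^{1/2}\|S^0-S^\star\|_{\infty,\infty}.$$
   Context: $\|A\|_{\infty,\infty}=\max_{i,j}|A_{ij}|$; $\|\cdot\|_F$ is the Frobenius norm. $\mathcal J_s(A)$ keeps the $s$ entries of $A$ largest in absolute value and sets the others to zero; $\mathcal T_\alpha(A)$ keeps $A_{ij}$ iff $|A_{ij}|$ is among the $\lfloor\alpha d\rfloor$ largest absolute values in row $i$ and also among the $\lfloor\alpha d\rfloor$ largest absolute values in column $j$, and sets the other entries to zero (ties broken arbitrarily). *)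

(* Scalars: R : archiRcfType (real closed, archimedean:
   needed for the floor and the square root). *)
From HB Require Import structures.
From mathcomp Require Import all_boot all_order all_algebra.
Set Implicit Arguments. Unset Strict Implicit. Unset Printing Implicit Defensive.
Import Order.TTheory GRing.Theory Num.Theory.
Local Open Scope ring_scope.

Definition maxnorm (R : archiRcfType) (d : nat) (A : 'M[R]_d) : R :=
  \big[Num.max/0]_(i < d) \big[Num.max/0]_(j < d) `|A i j|.

Definition frob (R : archiRcfType) (d : nat) (A : 'M[R]_d) : R :=
  Num.sqrt (\sum_(i < d) \sum_(j < d) (A i j) ^+ 2).

(* K is a set of k elements of T (or all of T if k >= #|T|) carrying the
   largest values of f: every kept value dominates every discarded value.
   (ties broken arbitrarily = any such K) *)
Definition topk_set (R : archiRcfType) (T : finType) (f : T -> R) (k : nat)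
  (K : {set T}) : Prop :=
  #|K| = minn k #|T| /\ (forall p q, p \in K -> q \notin K -> f q <= f p).

(* B is an admissible value of J_s(A) *)
Definition is_J (R : archiRcfType) (d : nat) (s : nat) (A B : 'M[R]_d) : Prop :=
  exists K : {set 'I_d * 'I_d},
    topk_set (fun p => `|A p.1 p.2|) s K /\
    (forall i j, B i j = if (i, j) \in K then A i j else 0).

(* B is an admissible value of T_alpha(A), with k = floor(alpha d)
   (truncn gives the floor for nonnegative arguments, 0 otherwise) *)
Definition is_T (R : archiRcfType) (d : nat) (alpha : R) (A B : 'M[R]_d) : Prop :=
  let k := Num.truncn (alpha * d%:R) in
  exists (Rw Cl : 'I_d -> {set 'I_d}),
    (forall i, topk_set (fun j => `|A i j|) k (Rw i)) /\
    (forall j, topk_set (fun i => `|A i j|) k (Cl j)) /\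
    (forall i j, B i j = if (j \in Rw i) && (i \in Cl j) then A i j else 0).

From HB Require Import structures.
From mathcomp Require Import all_boot all_order all_algebra.
From mathcomp Require Import zify lra.
Set Implicit Arguments. Unset Strict Implicit. Unset Printing Implicit Defensive.
Import Order.TTheory GRing.Theory Num.Theory.
Local Open Scope ring_scope.

(* Both thresholding steps only ever discard an entry [A_ij] that is dominated
   by a kept entry lying outside the support of [S*]: a support of size at most
   [k] cannot contain all [k] kept positions together with a discarded one.
   Off the support of [S*], [|Dhat_ij| <= ||Dhat - S*||], so every discarded
   entry is at most [||Dhat - S*||] in absolute value, which gives
   [||S0 - S*|| <= 2 ||Dhat - S*||].  Moreover [S0 - S*] vanishes outside the
   [s_hat] positions kept by [J] and the [s] positions of the support of [S*]. *)

Section HardThresholding.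
Variable R : archiRcfType.

Lemma topk_set_le (T : finType) (f : T -> R) k K (A : {set T}) (c : R) x :
  topk_set f k K -> (#|A| <= k)%N -> (forall y, y \notin A -> f y <= c) ->
  x \notin K -> f x <= c.
Proof.
move=> [cardK topK] cardA smallA xK.
have [xA|] := boolP (x \in A); last exact: smallA.
have [y yK yA] : exists2 y, y \in K & y \notin A.
  apply/subsetPn/negP => KA.
  have KA' : K \proper A by apply/properP; split => //; exists x.
  have := proper_card KA'; have := max_card A; lia.
exact: le_trans (topK _ _ yK xK) (smallA _ yA).
Qed.

Variable d : nat.
Implicit Types A B S : 'M[R]_d.

Lemma ler_maxnorm A i j : `|A i j| <= maxnorm A.
Proof. exact: le_trans (le_bigmax _ (fun j => `|A i j|) j) (le_bigmax _ _ i). Qed.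

Lemma maxnorm_ge0 A : 0 <= maxnorm A.
Proof. exact: bigmax_ge_id. Qed.

Lemma maxnorm_le A (c : R) : 0 <= c -> (forall i j, `|A i j| <= c) -> maxnorm A <= c.
Proof. by move=> c0 leAc; do 2!apply: bigmax_le => // ? _. Qed.

Lemma maxnormD A B : maxnorm (A + B) <= maxnorm A + maxnorm B.
Proof.
apply: maxnorm_le => [|i j]; first by rewrite addr_ge0 ?maxnorm_ge0.
by rewrite mxE (le_trans (ler_normD _ _)) // lerD ?ler_maxnorm.
Qed.

Definition mxsupp A : {set 'I_d * 'I_d} := [set p | A p.1 p.2 != 0].

Lemma mxsuppB A B : mxsupp (A - B) \subset mxsupp A :|: mxsupp B.
Proof.
apply/subsetP => -[i j]; rewrite !inE /= !mxE.
by apply: contraR; rewrite negb_or !negbK => /andP[/eqP-> /eqP->]; rewrite subr0.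
Qed.

Lemma frob_le_card_mxsupp A n :
  (#|mxsupp A| <= n)%N -> frob A <= Num.sqrt n%:R * maxnorm A.
Proof.
move=> suppA; have m0 := maxnorm_ge0 A.
rewrite /frob -[maxnorm A]ger0_norm // -sqrtr_sqr -sqrtrM ?ler0n //.
rewrite ler_sqrt ?mulr_ge0 ?ler0n ?exprn_ge0 //.
rewrite pair_big /= (bigID (mem (mxsupp A))) /= [X in _ + X]big1 => [|p]; last first.
  by rewrite inE negbK => /eqP ->; rewrite expr0n.
rewrite addr0; apply: le_trans (_ : \sum_(p in mxsupp A) maxnorm A ^+ 2 <= _).
  apply: ler_sum => p _; rewrite -real_normK ?num_real // !expr2.
  by apply: ler_pM; rewrite ?normr_ge0 ?ler_maxnorm.
rewrite sumr_const -[_ *+ #|_|]mulr_natl.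
by apply: ler_wpM2r; rewrite ?exprn_ge0 ?ler_nat.
Qed.

Definition pruned_below (c : R) A B :=
  forall i j, B i j = A i j \/ B i j = 0 /\ `|A i j| <= c.

Lemma pruned_below_trans (c : R) A B C :
  pruned_below c A B -> pruned_below c B C -> pruned_below c A C.
Proof.
move=> AB BC i j; have [->|[-> leBc]] := BC i j; first exact: AB.
by right; split=> //; case: (AB i j) => [<-|[]].
Qed.

Lemma pruned_below_norm (c : R) A B i j : pruned_below c A B -> `|B i j| <= `|A i j|.
Proof. by move=> /(_ i j) [->|[-> _]]; rewrite ?normr0. Qed.

Lemma pruned_below_mxsupp (c : R) A B : pruned_below c A B -> mxsupp B \subset mxsupp A.
Proof.
move=> AB; apply/subsetP => -[i j]; rewrite !inE /=.
by case: (AB i j) => [->|[-> _]]; rewrite ?eqxx.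
Qed.

Lemma maxnorm_pruned_below (c : R) S A B :
  0 <= c -> pruned_below c A B -> maxnorm (B - S) <= maxnorm (A - S) + c.
Proof.
move=> c0 AB; apply: maxnorm_le => [|i j]; first by rewrite addr_ge0 ?maxnorm_ge0.
have le_AS := ler_maxnorm (A - S) i j; rewrite !mxE in le_AS *.
case: (AB i j) => [->|[-> leAc]]; first by rewrite (le_trans le_AS) ?lerDl.
have -> : S i j = A i j - (A i j - S i j) by rewrite opprB addrC subrK.
by rewrite sub0r normrN (le_trans (ler_normB _ _)) // addrC lerD.
Qed.

Lemma is_J_card_mxsupp s A B : is_J s A B -> (#|mxsupp B| <= s)%N.
Proof.
move=> [K [[cardK _] defB]].
apply: leq_trans (_ : #|K| <= s)%N; last by rewrite cardK geq_minl.
apply/subset_leq_card/subsetP => -[i j]; rewrite inE /= defB.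
by case: ifP; rewrite ?eqxx.
Qed.

Lemma is_J_pruned_below s S A B (c : R) :
  (#|mxsupp S| <= s)%N -> (forall i j, S i j = 0 -> `|A i j| <= c) ->
  is_J s A B -> pruned_below c A B.
Proof.
move=> suppS offS [K [topK defB]] i j; rewrite defB.
case: ifP => [_|iK]; [by left | right; split => //].
apply: (topk_set_le topK suppS _ (negbT iK)) => -[i' j'].
by rewrite inE negbK => /eqP; apply: offS.
Qed.

Lemma is_T_pruned_below (alpha c : R) S A B :
  (forall i, (#|[set j | S i j != 0]|)%:R <= alpha * d%:R) ->
  (forall j, (#|[set i | S i j != 0]|)%:R <= alpha * d%:R) ->
  (forall i j, S i j = 0 -> `|A i j| <= c) ->
  is_T alpha A B -> pruned_below c A B.
Proof.
move=> rowS colS offS [Rw [Cl [topRw [topCl defB]]]] i j; rewrite defB.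
have le_truncn n : n%:R <= alpha * d%:R -> (n <= Num.truncn (alpha * d%:R))%N.
  by move=> le_n; rewrite truncn_ge_nat // (le_trans (ler0n _ n) le_n).
case: ifP => [_|kept]; [by left | right; split => //].
have [jRw|jRw] := boolP (j \in Rw i); rewrite ?jRw /= in kept.
- apply: (topk_set_le (topCl j) (le_truncn _ (colS j)) _ (negbT kept)) => i'.
  by rewrite inE negbK => /eqP; apply: offS.
- apply: (topk_set_le (topRw i) (le_truncn _ (rowS i)) _ jRw) => j'.
  by rewrite inE negbK => /eqP; apply: offS.
Qed.

End HardThresholding.

Theorem mainTheorem7 (R : archiRcfType) (d s : nat) (alpha : R)
  (Sstar Dstar Dhat : 'M[R]_d) (alphahat : R) (shat : nat)
  (J S0 : 'M[R]_d) :
  (#|[set p : 'I_d * 'I_d | Sstar p.1 p.2 != 0%R]| <= s)%N ->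
  (forall i : 'I_d, (#|[set j : 'I_d | Sstar i j != 0]|)%:R <= alpha * d%:R) ->
  (forall j : 'I_d, (#|[set i : 'I_d | Sstar i j != 0]|)%:R <= alpha * d%:R) ->
  alpha <= alphahat ->
  (s <= shat)%N ->
  is_J shat Dhat J ->
  is_T alphahat J S0 ->
  maxnorm (S0 - Sstar) <= 3 * maxnorm (Dhat - Dstar) + 3 * maxnorm (Dstar - Sstar)
  /\ frob (S0 - Sstar) <= Num.sqrt (2 * shat%:R) * maxnorm (S0 - Sstar).
Proof.
move=> suppS rowS colS le_alpha le_s isJ isT.
set c := maxnorm (Dhat - Sstar).
have c0 : 0 <= c := maxnorm_ge0 _.
have offS i j : Sstar i j = 0 -> `|Dhat i j| <= c.
  by move=> Sij0; have := ler_maxnorm (Dhat - Sstar) i j; rewrite !mxE Sij0 subr0.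
have le_alphad : alpha * d%:R <= alphahat * d%:R by rewrite ler_wpM2r.
have prJ : pruned_below c Dhat J := is_J_pruned_below (leq_trans suppS le_s) offS isJ.
have prS0 : pruned_below c J S0.
  apply: (is_T_pruned_below (S := Sstar)) isT => [i|j|i j Sij0].
  - exact: le_trans (rowS i) le_alphad.
  - exact: le_trans (colS j) le_alphad.
  - exact: le_trans (pruned_below_norm i j prJ) (offS i j Sij0).
split.
  have le_c : c <= maxnorm (Dhat - Dstar) + maxnorm (Dstar - Sstar).
    by have := maxnormD (Dhat - Dstar) (Dstar - Sstar); rewrite addrA subrK.
  have := maxnorm_pruned_below Sstar c0 (pruned_below_trans prJ prS0); rewrite -/c.
  have := maxnorm_ge0 (Dhat - Dstar); have := maxnorm_ge0 (Dstar - Sstar); lra.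
rewrite -natrM; apply: frob_le_card_mxsupp.
apply: leq_trans (subset_leq_card (mxsuppB _ _)) _.
apply: leq_trans (leq_card_setU _ _) _; rewrite mul2n -addnn leq_add //.
  exact: leq_trans (subset_leq_card (pruned_below_mxsupp prS0)) (is_J_card_mxsupp isJ).
exact: leq_trans suppS le_s.
Qed.
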